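(* Let $0<\alpha<1$, $b>0$, $c>0$ with $L=b+c<1$, and define for integers $\gamma\ge 1$ $$S_{inf}(\gamma)=\frac{1-\alpha^{\gamma+1}}{(1+\gamma L)(1-\alpha)}.$$ Let $$\gamma_0=\frac{1}{\ln\alpha}\left[W_{-1}\!\left(-\frac{1}{e}\,\alpha^{\frac{1}{L}-1}\right)+1\right]-\frac{1}{L},$$ where $W_{-1}$ is the $-1$ branch of the Lambert $W$ function (the inverse of $w\mapsto we^{w}$ on $(-\infty,-1]$). Then a maximizer $\gamma^*$ of $S_{inf}$ over integers $\gamma\ge 1$ satisfies: if $\gamma_0>1$, then $\gamma^*\in\{\lfloor\gamma_0\rfloor,\lceil\gamma_0\rceil\}$; otherwise $\gamma^*=1$.
   Context: $S_{inf}(\gamma)$ is the speedup ratio of distributed speculative decoding with draft length $\gamma$, acceptance rate $\alpha$, and $L$ the per-draft-token cost (SLM inference plus uplink transmission of the draft distribution) relative to one LLM run. Note that $L<1$ ensures the argument $-\frac1e\alpha^{1/L-1}$ lies in $(-1/e,0)$, where $W_{-1}$ is real-valued. *)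

From HB Require Import structures.
From mathcomp Require Import all_boot all_order all_algebra.
From mathcomp Require Import all_classical all_reals all_analysis.
Set Implicit Arguments. Unset Strict Implicit. Unset Printing Implicit Defensive.
Import Order.TTheory GRing.Theory Num.Theory.
Local Open Scope classical_set_scope.
Local Open Scope ring_scope.

(* Lambert W, branch -1: the (unique, for -1/e <= x < 0) w <= -1 with w e^w = x.
   Outside that domain the value is an unspecified default. *)
Definition LambertWm1 (R : realType) (x : R) : R :=
  xget 0 [set w : R | w <= -1 /\ w * expR w = x].

Definition S_inf (R : realType) (alpha L : R) (g : nat) : R :=
  (1 - alpha ^+ g.+1) / ((1 + g%:R * L) * (1 - alpha)).

Definition gamma0 (R : realType) (alpha L : R) : R :=
  (LambertWm1 (- (expR 1)^-1 * alpha `^ (L^-1 - 1)) + 1) / ln alpha - L^-1.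

From HB Require Import structures.
From mathcomp Require Import all_boot all_order all_algebra.
From mathcomp Require Import all_classical all_reals all_analysis.
From mathcomp Require Import ring lra zify.

Set Implicit Arguments.
Unset Strict Implicit.
Unset Printing Implicit Defensive.

Import Order.TTheory GRing.Theory Num.Theory numFieldNormedType.Exports.
Local Open Scope ring_scope.

(* With t = gamma + 1/L and l = ln alpha, S_inf is a positive multiple of
   psi t = (1 - G t) / t, where G t = exp ((t + 1 - 1/L) l) and G (g + 1/L) = alpha^(g+1).
   The sign of psi' is that of H t - 1 with H t = G t (1 - l t), and H decreases on
   t >= 0, so psi is strictly unimodal with its peak at the root t0 of H t0 = 1.
   Putting w = l t0 - 1 turns that equation into w e^w = -e^-1 alpha^(1/L - 1), with
   w < -1, so w is W_{-1} of that value and t0 - 1/L = gamma0.  Derivatives are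
   avoided: the tangent-line inequality for exp gives both monotonicity claims.
   Finally, an integer maximizer of a strictly unimodal sequence on n >= 1 sits at
   the floor or ceiling of the peak, or at 1 if the peak is not beyond 1. *)

Section ExpBounds.
Variable R : realType.

Lemma expR_ge_tangent (x y : R) : expR y * (1 + (x - y)) <= expR x.
Proof.
rewrite -{2}(subrK y x) expRD mulrC ler_wpM2r ?expR_ge1Dx //; exact/ltW/expR_gt0.
Qed.

Lemma expR_gt_tangent (x y : R) : x != y -> expR y * (1 + (x - y)) < expR x.
Proof.
move=> xy; rewrite -{2}(subrK y x) expRD mulrC ltr_pM2r ?expR_gt0 //.
by apply: expR_gt1Dx; rewrite subr_eq0.
Qed.

Lemma sqr_div4_le_expR (y : R) : 0 <= y -> y * y / 4 <= expR y.
Proof.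
move=> y0; have h : 1 + y / 2 <= expR (y / 2) by apply: expR_ge1Dx.
have -> : expR y = expR (y / 2) * expR (y / 2) by rewrite -expRD; congr expR; field.
have : 0 <= 1 + y / 2 by lra.
nra.
Qed.

End ExpBounds.

Lemma LambertWm1_exists (R : realType) (x : R) :
  - (expR 1)^-1 < x -> x < 0 -> exists w : R, w <= -1 /\ w * expR w = x.
Proof.
move=> x_gt x_lt0; set p := - x.
have p_gt0 : 0 < p by rewrite oppr_gt0.
have e_gt1 : 1 < expR (1 : R) by rewrite expR_gt1.
have p_lt1 : p < 1.
  have : (expR (1 : R))^-1 < 1 by rewrite invf_lt1 // (lt_trans _ e_gt1).
  rewrite /p; lra.
set y := 4 / p.
have y_gt4 : 4 < y by rewrite /y ltr_pdivlMr //; nra.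
have y_small : y * expR (- y) <= p.
  rewrite expRN ler_pdivrMr ?expR_gt0 //.
  have y_sqr : p * (y * y / 4) <= p * expR y.
    by rewrite ler_wpM2l ?sqr_div4_le_expR //; lra.
  apply: le_trans y_sqr; rewrite [leRHS](_ : _ = y) //.
  by rewrite /y; field; rewrite gt_eqF.
have cont : continuous (fun w : R => w * expR w).
  by move=> w; apply: continuousM; [exact: cvg_id | exact: continuous_expR].
have ends : Num.min (- y * expR (- y)) (-1 * expR (-1)) <= x
            <= Num.max (- y * expR (- y)) (-1 * expR (-1)).
  rewrite ge_min le_max; apply/andP; split; apply/orP; [right | left].
  - by rewrite expRN mulN1r; lra.
  - by rewrite mulNr lerNr.
have y_ge1 : - y <= -1 by lra.
have [w] := IVT y_ge1 (continuous_subspaceT cont) ends.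
by rewrite in_itv /= => /andP [_ w_le] <-; exists w.
Qed.

Lemma LambertWm1_spec (R : realType) (x : R) :
  - (expR 1)^-1 < x -> x < 0 ->
  LambertWm1 x < -1 /\ LambertWm1 x * expR (LambertWm1 x) = x.
Proof.
move=> x_gt x_lt0.
have [w_le wE] : LambertWm1 x <= -1 /\ LambertWm1 x * expR (LambertWm1 x) = x :=
  xgetPex 0 (LambertWm1_exists x_gt x_lt0).
split => //; rewrite lt_neqAle w_le andbT; apply/eqP => w1.
by move: x_gt; rewrite -wE w1 expRN mulN1r ltxx.
Qed.

Section ExpDecayRatio.
Variables (R : realType) (l k : R).
Hypothesis l_lt0 : l < 0.

Local Notation G t := (expR ((t + k) * l)).
Local Notation H t := (G t * (1 - l * t)).

Definition decay_ratio (t : R) : R := (1 - G t) / t.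

Lemma decay_ge_tangent (u v : R) : G v * (1 + (u - v) * l) <= G u.
Proof.
have := expR_ge_tangent ((u + k) * l) ((v + k) * l).
by rewrite -mulrBl opprD addrACA subrr addr0.
Qed.

Lemma decay_gt_tangent (u v : R) : u != v -> G v * (1 + (u - v) * l) < G u.
Proof.
move=> uv; have := @expR_gt_tangent R ((u + k) * l) ((v + k) * l).
rewrite -mulrBl opprD addrACA subrr addr0; apply.
by rewrite (inj_eq (mulIf (ltr0_neq0 l_lt0))) (inj_eq (addIr k)).
Qed.

Lemma decay_crit_antitone (u v : R) : 0 <= u -> u <= v -> H v <= H u.
Proof.
move=> u_ge0 uv; have Gv_gt0 : 0 < G v by exact: expR_gt0.
have lu_pos : 0 < 1 - l * u.
  have : 0 <= - l * u by rewrite mulr_ge0 // oppr_ge0 ltW.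
  rewrite mulNr; lra.
apply: le_trans (ler_wpM2r (ltW lu_pos) (decay_ge_tangent u v)).
rewrite -mulrA ler_wpM2l ?(ltW Gv_gt0) //.
have : 0 <= (v - u) * (l * l * u) by apply: mulr_ge0; nra.
nra.
Qed.

Lemma decay_ratio_lt_right (s t : R) :
  0 < s -> s < t -> H s <= 1 -> decay_ratio t < decay_ratio s.
Proof.
move=> s_gt0 st Hs; have t_gt0 : 0 < t by lra.
have tangent := decay_gt_tangent (negbT (gt_eqF st)).
rewrite /decay_ratio ltr_pdivrMr // mulrAC ltr_pdivlMr //.
have : s * (1 - G t) < s * (1 - G s - G s * (t - s) * l) by rewrite ltr_pM2l //; lra.
have : 0 <= (t - s) * (1 - H s) by apply: mulr_ge0; lra.
nra.
Qed.

Lemma decay_ratio_lt_left (s t : R) :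
  0 < s -> s < t -> 1 <= H t -> decay_ratio s < decay_ratio t.
Proof.
move=> s_gt0 st Ht; have t_gt0 : 0 < t by lra.
have tangent := decay_gt_tangent (negbT (lt_eqF st)).
rewrite /decay_ratio ltr_pdivrMr // mulrAC ltr_pdivlMr //.
have : t * (1 - G s) < t * (1 - G t - G t * (s - t) * l) by rewrite ltr_pM2l //; lra.
have : 0 <= (t - s) * (H t - 1) by apply: mulr_ge0; lra.
nra.
Qed.

Lemma decay_ratio_decreasing (t0 s t : R) :
  0 < t0 -> H t0 = 1 -> t0 <= s -> s < t -> decay_ratio t < decay_ratio s.
Proof.
move=> t0_gt0 crit_t0 t0s st; apply: decay_ratio_lt_right => //; first lra.
by rewrite -[leRHS]crit_t0; apply: decay_crit_antitone => //; exact: ltW.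
Qed.

Lemma decay_ratio_increasing (t0 s t : R) :
  H t0 = 1 -> 0 < s -> s < t -> t <= t0 -> decay_ratio s < decay_ratio t.
Proof.
move=> crit_t0 s_gt0 st tt0; apply: decay_ratio_lt_left => //.
by rewrite -[leLHS]crit_t0; apply: decay_crit_antitone => //; lra.
Qed.

End ExpDecayRatio.

Lemma S_inf_decay_ratio (R : realType) (alpha L : R) (g : nat) :
  0 < alpha -> alpha < 1 -> 0 < L ->
  S_inf alpha L g =
  decay_ratio (ln alpha) (1 - L^-1) (g%:R + L^-1) / (L * (1 - alpha)).
Proof.
move=> alpha_gt0 alpha_lt1 L_gt0; rewrite /S_inf /decay_ratio.
have -> : alpha ^+ g.+1 = expR ((g%:R + L^-1 + (1 - L^-1)) * ln alpha).
  rewrite -[LHS]lnK ?posrE ?exprn_gt0 // lnXn //; congr expR.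
  by rewrite -[LHS]mulr_natr -addn1 natrD; ring.
have gL_gt0 : 0 < g%:R * L + 1 by rewrite ltr_wpDl // mulr_ge0 // ltW.
by field; rewrite !gt_eqF // subr_gt0.
Qed.

Lemma gamma0_critical (R : realType) (alpha L : R) :
  0 < alpha -> alpha < 1 -> 0 < L -> L < 1 ->
  let l := ln alpha in let t0 := gamma0 alpha L + L^-1 in
  0 < t0 /\ expR ((t0 + (1 - L^-1)) * l) * (1 - l * t0) = 1.
Proof.
move=> alpha_gt0 alpha_lt1 L_gt0 L_lt1 l t0.
have l_lt0 : l < 0 by apply: ln_lt0; rewrite alpha_gt0.
have iL_gt1 : 1 < L^-1 by rewrite invf_gt1.
have powE : alpha `^ (L^-1 - 1) = expR ((L^-1 - 1) * l).
  by rewrite -[LHS]lnK ?posrE ?powR_gt0 // ln_powR.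
have pow_lt1 : alpha `^ (L^-1 - 1) < 1 by rewrite powE expR_lt1; nra.
have pow_gt0 : 0 < alpha `^ (L^-1 - 1) by apply: powR_gt0.
have einv_gt0 : 0 < (expR (1 : R))^-1 by rewrite invr_gt0 expR_gt0.
set x := - (expR 1)^-1 * alpha `^ (L^-1 - 1).
have x_gt : - (expR 1)^-1 < x by rewrite /x mulNr ltrN2 gtr_pMr.
have x_lt0 : x < 0 by rewrite /x mulNr oppr_lt0 mulr_gt0.
have [w_lt wE] := LambertWm1_spec x_gt x_lt0.
set w := LambertWm1 x in w_lt wE.
have t0E : t0 = (w + 1) / l by rewrite /t0 /gamma0 subrK.
split; first by rewrite t0E ltr_ndivlMr // mul0r; lra.
have l_neq0 : l != 0 by rewrite ltr0_neq0.
have -> : 1 - l * t0 = - w by rewrite t0E; field.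
have -> : (t0 + (1 - L^-1)) * l = w + (1 - (L^-1 - 1) * l).
  by rewrite t0E mulrDl divfK //; ring.
rewrite expRD expRD expRN -powE mulrC mulNr !mulrA wE /x.
by field; rewrite !gt_eqF ?expR_gt0.
Qed.

Section UnimodalArgmax.
Variables (R : realType) (f : nat -> R) (n : nat).

Lemma argmax_geq (m : nat) :
  (forall m', (m' < m)%N -> f m' < f m) -> f m <= f n -> (m <= n)%N.
Proof.
move=> incr fmn; rewrite leqNgt; apply/negP => /incr.
by rewrite ltNge fmn.
Qed.

Lemma argmax_leq (m : nat) :
  (forall m', (m < m')%N -> f m' < f m) -> f m <= f n -> (n <= m)%N.
Proof.
move=> decr fmn; rewrite leqNgt; apply/negP => /decr.
by rewrite ltNge fmn.
Qed.

Lemma unimodal_argmax (x : R) :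
  (forall m m', (m < m')%N -> m'%:R <= x -> f m < f m') ->
  (forall m m', (m < m')%N -> x <= m%:R -> f m' < f m) ->
  (1 <= n)%N -> (forall m, (1 <= m)%N -> f m <= f n) ->
  if 1 < x then n%:Z = Num.floor x \/ n%:Z = Num.ceil x else n = 1%N.
Proof.
move=> incr decr n_ge1 fmax; case: ifPn => [x_gt1 | ].
- set fl := Num.floor x; set ce := Num.ceil x.
  have fl_ge1 : 1 <= fl by rewrite /fl floor_ge_int ltW.
  have ce_fl : ce = fl \/ ce = fl + 1.
    rewrite /ce ceil_floor -/fl.
    by case: (x \isn't a Num.int); [right | left; rewrite addr0].
  have ce_ge1 : 1 <= ce by case: ce_fl => ->; lia.
  have [nf nfE] : exists nf : nat, nf%:Z = fl by exists `|fl|%N; rewrite gez0_abs; lia.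
  have [nc ncE] : exists nc : nat, nc%:Z = ce by exists `|ce|%N; rewrite gez0_abs; lia.
  have nf_le : (nf%:R : R) <= x by have := floor_le x; rewrite -/fl -nfE -pmulrn.
  have nc_ge : x <= (nc%:R : R) by have := ceil_ge x; rewrite -/ce -ncE -pmulrn.
  have nf_n : (nf <= n)%N.
    by apply: argmax_geq => [m' ?|]; [exact: incr | apply: fmax; lia].
  have n_nc : (n <= nc)%N.
    by apply: argmax_leq => [m' ?|]; [exact: decr | apply: fmax; lia].
  lia.
- rewrite -leNgt => x_le1; apply/eqP; rewrite eqn_leq n_ge1 andbT.
  by apply: argmax_leq => [m' ? |]; [exact: decr | exact: fmax].
Qed.

End UnimodalArgmax.

Theorem theorem2 (R : realType) (alpha b c : R)
  (halpha0 : 0 < alpha) (halpha1 : alpha < 1) (hb : 0 < b) (hc : 0 < c)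
  (hL : b + c < 1) (gstar : nat) (hg1 : (1 <= gstar)%N)
  (hmax : forall g : nat, (1 <= g)%N -> S_inf alpha (b + c) g <= S_inf alpha (b + c) gstar) :
  if 1 < gamma0 alpha (b + c)
  then (gstar%:Z = Num.floor (gamma0 alpha (b + c)) \/
        gstar%:Z = Num.ceil (gamma0 alpha (b + c)))
  else gstar = 1%N.
Proof.
set L := b + c in hL hmax *.
have L_gt0 : 0 < L by rewrite /L; lra.
have l_lt0 : ln alpha < 0 by apply: ln_lt0; rewrite halpha0.
have iL_gt0 : 0 < L^-1 by rewrite invr_gt0.
have [t0_gt0 crit] := gamma0_critical halpha0 halpha1 L_gt0 hL.
set psi := decay_ratio (ln alpha) (1 - L^-1).
apply: (@unimodal_argmax R (fun g => psi (g%:R + L^-1))) => //.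
- move=> m m' mm' m'_le; apply: decay_ratio_increasing crit _ _ _ => //.
  + by rewrite ltr_wpDl.
  + by rewrite ltrD2r ltr_nat.
  + by rewrite lerD2r.
- move=> m m' mm' m_ge; apply: decay_ratio_decreasing t0_gt0 crit _ _ => //.
  + by rewrite lerD2r.
  + by rewrite ltrD2r ltr_nat.
- move=> g /hmax; rewrite !S_inf_decay_ratio // ler_pM2r //.
  by rewrite invr_gt0 mulr_gt0 // subr_gt0.
Qed.
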